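(* For any grid $\mathcal G$ and any $\delta<c(\mathcal G)/2$, if $M$ is a finitely presented $n$-parameter persistence module then $d_I(\mathsf M^{\mathcal G}_\delta(M),M)\leq\delta$.
   Context: Modules are $\mathbb{R}^n$-graded modules over $P_n$ (monoid ring over a field of $([0,\infty)^n,+)$). A grid is $\mathcal G=\prod_i\mathcal G^i$, $\mathcal G^i:[k_i]\to\mathbb{R}$, with controlling constant $c(\mathcal G)=\min\{\|\vec a-\vec b\|_\infty:\vec a\ne\vec b\in\mathrm{Im}\,\mathcal G\}$. The merge function $\mathsf M^{\mathcal G}_\delta:\mathbb{R}^n\to\mathbb{R}^n$ acts coordinatewise by sending $x$ to $\mathcal G^i(k)$ if $x\in[\mathcal G^i(k)-\delta,\mathcal G^i(k)+\delta]$, else fixing $x$. Given a presentation $F_1\xrightarrow{p_1}F_0\to M$ with $F_0,F_1$ finitely generated free, $\mathsf M^{\mathcal G}_\delta(M)$ is the cokernel of the map obtained by replacing every generator grade $\vec g$ by $\mathsf M^{\mathcal G}_\delta(\vec g)$ and every monomial $\vec x^{\vec r-\vec b}$ in $p_1$ by $\vec x^{\mathsf M(\vec r)-\mathsf M(\vec b)}$. $d_I$ is the interleaving distance: $M,N$ are $\varepsilon$-interleaved if there are natural maps $M_{\vec a}\to N_{\vec a+\varepsilon\vec1}$, $N_{\vec a}\to M_{\vec a+\varepsilon\vec1}$ whose composites are the internal maps shifting by $2\varepsilon\vec1$; $d_I$ is the infimum of such $\varepsilon$. *)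

From HB Require Import structures.
From mathcomp Require Import all_boot all_order all_algebra.
From mathcomp Require Import classical_sets reals constructive_ereal ereal.
Set Implicit Arguments.
Unset Strict Implicit.
Unset Printing Implicit Defensive.
Import Order.TTheory GRing.Theory Num.Theory.
Local Open Scope ring_scope.

Section PersistenceDefs.
Variables (K : fieldType) (R : realType) (n : nat).

Definition lev (a b : 'rV[R]_n) : bool := [forall i, a ord0 i <= b ord0 i].
Definition shift (a : 'rV[R]_n) (eps : R) : 'rV[R]_n := a + const_mx eps.
Definition norminf (a : 'rV[R]_n) : R := \big[Num.max/0]_(i < n) `|a ord0 i|.

(* A pointwise finite-dimensional R^n-persistence module over K:
   M_a = K^(pdim a), and pmap a b is the structure map M_a -> M_b for a <= b
   (matrices act on row vectors: v |-> v *m pmap a b).  The values of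
   pmap a b for a not <= b are irrelevant. *)
Record pmod := PMod {
  pdim : 'rV[R]_n -> nat;
  pmap : forall a b : 'rV[R]_n, 'M[K]_(pdim a, pdim b) }.
Arguments pmap : clear implicits.

(* functoriality (not needed by the statement, recorded for documentation) *)
Definition is_pmod (M : pmod) : Prop :=
  (forall a, pmap M a a = 1%:M) /\
  (forall a b c, lev a b -> lev b c -> pmap M a b *m pmap M b c = pmap M a c).

Definition interleaved (M N : pmod) (eps : R) : Prop :=
  exists (phi : forall a, 'M[K]_(pdim M a, pdim N (shift a eps)))
         (psi : forall a, 'M[K]_(pdim N a, pdim M (shift a eps))),
    [/\ forall a b, lev a b ->
          pmap M a b *m phi b = phi a *m pmap N (shift a eps) (shift b eps),
        forall a b, lev a b ->
          pmap N a b *m psi b = psi a *m pmap M (shift a eps) (shift b eps),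
        forall a, phi a *m psi (shift a eps) = pmap M a (shift (shift a eps) eps)
      & forall a, psi a *m phi (shift a eps) = pmap N a (shift (shift a eps) eps)].

(* interleaving distance, in the extended reals (+oo if never interleaved) *)
Definition dI (M N : pmod) : \bar R :=
  ereal_inf [set (e%:E)%E | e in [set e : R | 0 <= e /\ interleaved M N e]].

(* A presentation F_1 --p_1--> F_0 with F_0 = (+)_{i<m} P_n(-gen i),
   F_1 = (+)_{j<l} P_n(-rel j).  Row j of [mat] holds the coefficients c_{j i}
   of p_1(e_j) = sum_i c_{j i} x^(rel j - gen i) e_i. *)
Record pres := Pres {
  pm : nat; pl : nat;
  pgen : 'I_pm -> 'rV[R]_n;
  prel : 'I_pl -> 'rV[R]_n;
  pmat : 'M[K]_(pl, pm) }.
Arguments pgen : clear implicits.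
Arguments prel : clear implicits.
Arguments pmat : clear implicits.

(* p_1 is a well-defined graded map: monomials x^(rel j - gen i) exist *)
Definition valid_pres (P : pres) : Prop :=
  forall j i, pmat P j i != 0 -> lev (pgen P i) (prel P j).

(* the cokernel module of a presentation, as a subquotient of K^m:
   (F_0)_a = span of e_i with gen i <= a,  im(p_1)_a = span of rows j with rel j <= a *)
Definition pres_F0 (P : pres) (a : 'rV[R]_n) : 'M[K]_(pm P) :=
  diag_mx (\row_i (lev (pgen P i) a)%:R).
Definition pres_Im (P : pres) (a : 'rV[R]_n) : 'M[K]_(pl P, pm P) :=
  \matrix_(j, i) (if lev (prel P j) a then pmat P j i else 0).
(* a complement of im(p_1)_a in (F_0)_a, representing the quotient *)
Definition pres_C (P : pres) a : 'M[K]_(pm P) := (pres_F0 P a :\: pres_Im P a)%MS.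
Definition pres_dim (P : pres) a : nat := \rank (pres_C P a).
Definition pres_map (P : pres) a b : 'M[K]_(pres_dim P a, pres_dim P b) :=
  row_base (pres_C P a) *m proj_mx (pres_C P b) (<<pres_Im P b>>%MS)
    *m pinvmx (row_base (pres_C P b)).
Definition coker (P : pres) : pmod := @PMod (pres_dim P) (pres_map P).

(* grids G = prod_i G^i, G^i : [k_i] -> R *)
Record grid := Grid { gk : 'I_n -> nat; gval : forall i : 'I_n, 'I_(gk i) -> R }.
Arguments gval : clear implicits.

Definition grid_pt (G : grid) (t : forall i : 'I_n, 'I_(gk G i)) : 'rV[R]_n :=
  \row_i gval G i (t i).
Arguments grid_pt : clear implicits.

(* delta < c(G)/2, where c(G) = min of sup-distances between distinct points
   of Im G (written out; vacuous when Im G has < 2 points, i.e. c(G) = +oo) *)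
Definition lt_half_c (G : grid) (delta : R) : Prop :=
  forall s t : (forall i : 'I_n, 'I_(gk G i)), grid_pt G s != grid_pt G t ->
    delta < norminf (grid_pt G s - grid_pt G t) / 2.

Definition merge1 (G : grid) (delta : R) (i : 'I_n) (x : R) : R :=
  match [pick k | `|x - gval G i k| <= delta] with
  | Some k => gval G i k
  | None => x
  end.
Definition merge (G : grid) (delta : R) (a : 'rV[R]_n) : 'rV[R]_n :=
  \row_i merge1 G delta i (a ord0 i).

(* merged presentation: grades replaced by merged grades, coefficients kept
   (monomials x^(r-b) become x^(M(r)-M(b))) *)
Definition merge_pres (G : grid) (delta : R) (P : pres) : pres :=
  @Pres (pm P) (pl P) (fun i => merge G delta (pgen P i))
        (fun j => merge G delta (prel P j)) (pmat P).

End PersistenceDefs.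

From Pilot Require Import Defs.
From mathcomp Require Import all_boot all_order all_algebra.
From mathcomp Require Import classical_sets reals constructive_ereal ereal.
From mathcomp Require Import lra.
Set Implicit Arguments.
Unset Strict Implicit.
Unset Printing Implicit Defensive.
Import Order.TTheory GRing.Theory Num.Theory.
Local Open Scope ring_scope.

(* At every grade a, both cokernels are subquotients F_a / I_a of the same
   space K^m, where F_a is spanned by the generators of grade <= a and I_a by
   the relations of grade <= a.  Merging moves each grade by at most delta in
   every coordinate, so the merged filtrations are sandwiched between the
   original ones shifted by -delta and +delta.  The maps of an interleaving are
   then the maps induced by these inclusions of subquotients, and all required
   identities reduce to the functoriality of induced maps. *)

Section SubquotientMap.
Variables (K : fieldType) (m : nat).

(* The map F_a / I_a -> F_b / I_b induced by the identity of K^m, where each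
   quotient is represented by a basis of the complement [F :\: I]. *)
Definition subquot_map pa pb (Fa : 'M[K]_m) (Ia : 'M_(pa, m))
    (Fb : 'M_m) (Ib : 'M_(pb, m)) : 'M_(\rank (Fa :\: Ia)%MS, \rank (Fb :\: Ib)%MS) :=
  row_base (Fa :\: Ia)%MS *m proj_mx (Fb :\: Ib)%MS <<Ib>>%MS
    *m pinvmx (row_base (Fb :\: Ib)%MS).

Lemma mulmx_subquot_map pa pb pc (Fa : 'M[K]_m) (Ia : 'M_(pa, m))
    (Fb : 'M_m) (Ib : 'M_(pb, m)) (Fc : 'M_m) (Ic : 'M_(pc, m)) :
  (Fa <= Fb)%MS -> (Ib <= Fb)%MS -> (Ib <= Ic)%MS ->
  subquot_map Fa Ia Fb Ib *m subquot_map Fb Ib Fc Ic = subquot_map Fa Ia Fc Ic.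
Proof.
move=> sFab sIFb sIbc; rewrite /subquot_map.
set B := row_base (Fa :\: Ia)%MS.
set X := B *m proj_mx (Fb :\: Ib)%MS <<Ib>>%MS.
have X_coords : X *m pinvmx (row_base (Fb :\: Ib)%MS) *m row_base (Fb :\: Ib)%MS = X.
  by rewrite mulmxKpV // eq_row_base proj_mx_sub.
rewrite (mulmxA (X *m _)) (mulmxA (X *m _)) X_coords; congr (_ *m _).
(* [B] and its projection [X] differ by a vector of [Ib <= Ic], killed at [c]. *)
have sB : (B <= (Fb :\: Ib)%MS + <<Ib>>%MS)%MS.
  rewrite eq_row_base (submx_trans (diffmxSl _ _)) // (submx_trans sFab) //.
  rewrite -{1}(addsmx_diff_cap_eq Fb Ib) addsmxS // genmxE.
  exact: capmxSr.
have killed : (B - X) *m proj_mx (Fc :\: Ic)%MS <<Ic>>%MS = 0.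
  apply: proj_mx_0; last first.
    by rewrite genmxE (submx_trans (proj_mx_compl_sub sB)) // genmxE.
  by apply/eqP; rewrite -submx0 -(capmx_diff Fc Ic) capmxS // genmxE.
by apply/eqP; rewrite eq_sym -subr_eq0 -mulmxBl killed.
Qed.

End SubquotientMap.

Lemma lev_trans (R : realType) (n : nat) (a b c : 'rV[R]_n) :
  lev a b -> lev b c -> lev a c.
Proof.
by move=> /forallP ab /forallP bc; apply/forallP => i; apply: le_trans (ab i) (bc i).
Qed.

Lemma lev_shift (R : realType) (n : nat) (a b : 'rV[R]_n) e :
  lev a b -> lev (shift a e) (shift b e).
Proof. by move=> /forallP ab; apply/forallP => i; rewrite !mxE lerD2r. Qed.

Lemma lev_shift_near (R : realType) (n : nat) (x y a : 'rV[R]_n) e :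
  (forall i, `|y ord0 i - x ord0 i| <= e) -> lev x a -> lev y (shift a e).
Proof.
move=> near /forallP xa; apply/forallP => i; rewrite !mxE.
by have := xa i; have := near i; rewrite ler_distlC => /andP[? ?] ?; lra.
Qed.

Section SubquotientModule.
Variables (K : fieldType) (R : realType) (n m : nat).

Definition subquot_pmod p (F : 'rV[R]_n -> 'M[K]_m) (I : 'rV[R]_n -> 'M[K]_(p, m)) :=
  @PMod K R n (fun a => \rank (F a :\: I a)%MS)
    (fun a b => subquot_map (F a) (I a) (F b) (I b)).

Variables (delta : R) (p p' : nat) (F F' : 'rV[R]_n -> 'M[K]_m).
Variables (I : 'rV[R]_n -> 'M[K]_(p, m)) (I' : 'rV[R]_n -> 'M[K]_(p', m)).
Hypotheses (F_mono : forall a b, lev a b -> (F a <= F b)%MS)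
           (F'_mono : forall a b, lev a b -> (F' a <= F' b)%MS)
           (I_mono : forall a b, lev a b -> (I a <= I b)%MS)
           (I'_mono : forall a b, lev a b -> (I' a <= I' b)%MS)
           (sIF : forall a, (I a <= F a)%MS)
           (sI'F' : forall a, (I' a <= F' a)%MS).
Hypotheses (sFF' : forall a, (F a <= F' (shift a delta))%MS)
           (sF'F : forall a, (F' a <= F (shift a delta))%MS)
           (sII' : forall a, (I a <= I' (shift a delta))%MS)
           (sI'I : forall a, (I' a <= I (shift a delta))%MS).

Lemma subquot_interleaved :
  interleaved (subquot_pmod F' I') (subquot_pmod F I) delta.
Proof.
exists (fun a => subquot_map (F' a) (I' a) (F (shift a delta)) (I (shift a delta))).
exists (fun a => subquot_map (F a) (I a) (F' (shift a delta)) (I' (shift a delta))).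
by split=> *; rewrite !mulmx_subquot_map ?F_mono ?F'_mono ?I_mono ?I'_mono ?lev_shift.
Qed.

End SubquotientModule.

Lemma eq_pick_mutual (T : finType) (P Q : pred T) k k' :
  pick P = Some k -> pick Q = Some k' -> P k' -> Q k -> k = k'.
Proof.
rewrite /pick /enum_mem; elim: (Finite.enum T) => //= x s IH.
case Px: (x \in P); case Qx: (x \in Q) => /=; last exact: IH.
- by move=> [<-] [<-].
- by move=> [<-] _ _ Qk; move: Qx; rewrite -[x \in Q]/(Q x) Qk.
- by move=> _ [<-] Pk; move: Px; rewrite -[x \in P]/(P x) Pk.
Qed.

Section Merge.
Variables (R : realType) (n : nat) (G : grid R n) (delta : R).
Hypothesis delta_ge0 : 0 <= delta.

Lemma merge1_near i x : `|merge1 G delta i x - x| <= delta.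
Proof. by rewrite /merge1; case: pickP => [k|_]; rewrite 1?distrC // subrr normr0. Qed.

(* No separation of the grid is needed: if merging reversed x <= y, both chosen
   grid values would be delta-close to x and to y, so [pick] would have chosen
   the same index twice. *)
Lemma merge1_mono i : {homo merge1 G delta i : x y / x <= y}.
Proof.
move=> x y le_xy; rewrite /merge1.
pose near z (k : 'I_(gk G i)) := `|z - @gval _ _ G i k| <= delta.
have nearP z k : pick (near z) = Some k -> near z k by case: pickP => // ? ? [<-].
have farP z k : pick (near z) = None -> ~~ near z k.
  by case: pickP => // far _; rewrite far.
case Ex: (pick (near x)) => [k|]; case Ey: (pick (near y)) => [k'|] //.
- have /nearP := Ex; have /nearP := Ey.
  rewrite /near !ler_distlC => /andP[? ?] /andP[? ?].
  rewrite leNgt; apply/negP => lt_k'k.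
  have eq_kk' : k = k' by apply: (eq_pick_mutual Ex Ey); rewrite /near ler_distlC; lra.
  by rewrite eq_kk' ltxx in lt_k'k.
- have := farP y k Ey; have /nearP := Ex; rewrite /near !ler_distlC => /andP[? ?] far.
  by rewrite leNgt; apply: contraNN far => ?; apply/andP; split; lra.
- have := farP x k' Ex; have /nearP := Ey; rewrite /near !ler_distlC => /andP[? ?] far.
  by rewrite leNgt; apply: contraNN far => ?; apply/andP; split; lra.
Qed.

Lemma merge_near x i : `|Defs.merge G delta x ord0 i - x ord0 i| <= delta.
Proof. by rewrite mxE merge1_near. Qed.

Lemma lev_merge_shift x a : lev x a -> lev (Defs.merge G delta x) (shift a delta).
Proof. exact/lev_shift_near/merge_near. Qed.

Lemma lev_unmerge_shift x a : lev (Defs.merge G delta x) a -> lev x (shift a delta).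
Proof. by apply: lev_shift_near => i; rewrite distrC merge_near. Qed.

Lemma merge_lev_mono : {homo Defs.merge G delta : x y / lev x y}.
Proof.
by move=> x y /forallP xy; apply/forallP => i; rewrite !mxE merge1_mono ?xy.
Qed.

End Merge.

Section IndicatorMatrices.
Variables (K : fieldType) (l m : nat).

Lemma diag_indicator_sub (p q : pred 'I_m) : subpred p q ->
  (diag_mx (\row_i (p i)%:R : 'rV[K]_m) <= diag_mx (\row_i (q i)%:R))%MS.
Proof.
move=> pq; apply/submxP; exists (diag_mx (\row_i (p i)%:R)).
apply/matrixP => i j; rewrite mul_diag_mx !mxE.
by case: (boolP (p i)) => [/pq -> | _]; rewrite /= ?mul1r ?mul0r ?mul0rn.
Qed.

Lemma row_mask_sub (p q : pred 'I_l) (A : 'M[K]_(l, m)) : subpred p q ->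
  (\matrix_(j, i) (if p j then A j i else 0)
     <= \matrix_(j, i) (if q j then A j i else 0))%MS.
Proof.
move=> pq; apply/submxP; exists (diag_mx (\row_j (p j)%:R)).
apply/matrixP => j i; rewrite mul_diag_mx !mxE.
by case: (boolP (p j)) => [/pq -> | _]; rewrite /= ?mul1r ?mul0r.
Qed.

Lemma row_mask_sub_diag (p : pred 'I_l) (q : pred 'I_m) (A : 'M[K]_(l, m)) :
    (forall j i, A j i != 0 -> p j -> q i) ->
  (\matrix_(j, i) (if p j then A j i else 0) <= diag_mx (\row_i (q i)%:R))%MS.
Proof.
move=> Apq; apply/submxP; exists (\matrix_(j, i) (if p j then A j i else 0)).
apply/matrixP => j i; rewrite mul_mx_diag !mxE.
case: (boolP (p j)) => [pj | _]; last by rewrite mul0r.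
have [-> | /Apq/(_ pj) -> ] := eqVneq (A j i) 0; by rewrite ?mul0r ?mulr1.
Qed.

End IndicatorMatrices.

Section Presentation.
Variables (K : fieldType) (R : realType) (n : nat).
Implicit Types (Q : pres K R n) (a b : 'rV[R]_n).

Lemma pres_F0_mono Q a b : lev a b -> (pres_F0 Q a <= pres_F0 Q b)%MS.
Proof. by move=> ab; apply: diag_indicator_sub => i /lev_trans; apply. Qed.

Lemma pres_Im_mono Q a b : lev a b -> (pres_Im Q a <= pres_Im Q b)%MS.
Proof. by move=> ab; apply: row_mask_sub => j /lev_trans; apply. Qed.

Lemma pres_Im_sub_F0 Q a : valid_pres Q -> (pres_Im Q a <= pres_F0 Q a)%MS.
Proof. by move=> vQ; apply: row_mask_sub_diag => j i /vQ /lev_trans; apply. Qed.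

Variables (G : grid R n) (delta : R) (P : pres K R n).
Hypothesis delta_ge0 : 0 <= delta.
Let P' := merge_pres G delta P.

Lemma valid_merge_pres : valid_pres P -> valid_pres P'.
Proof. by move=> vP j i /vP; apply: merge_lev_mono. Qed.

Lemma merge_pres_F0_sub a : (pres_F0 P' a <= pres_F0 P (shift a delta))%MS.
Proof. by apply: diag_indicator_sub => i; apply: lev_unmerge_shift. Qed.

Lemma pres_F0_sub_merge a : (pres_F0 P a <= pres_F0 P' (shift a delta))%MS.
Proof. by apply: diag_indicator_sub => i; apply: lev_merge_shift. Qed.

Lemma merge_pres_Im_sub a : (pres_Im P' a <= pres_Im P (shift a delta))%MS.
Proof. by apply: row_mask_sub => j; apply: lev_unmerge_shift. Qed.

Lemma pres_Im_sub_merge a : (pres_Im P a <= pres_Im P' (shift a delta))%MS.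
Proof. by apply: row_mask_sub => j; apply: lev_merge_shift. Qed.

Lemma coker_merge_interleaved :
  valid_pres P -> interleaved (coker P') (coker P) delta.
Proof.
move=> vP; apply: (@subquot_interleaved _ _ _ (pm P)) => [a b|a b|a b|a b|a|a|a|a|a|a].
- exact: (pres_F0_mono P).
- exact: (pres_F0_mono P').
- exact: (pres_Im_mono P).
- exact: (pres_Im_mono P').
- exact: (pres_Im_sub_F0 a vP).
- exact: (pres_Im_sub_F0 a (valid_merge_pres vP)).
- exact: pres_F0_sub_merge.
- exact: merge_pres_F0_sub.
- exact: pres_Im_sub_merge.
- exact: merge_pres_Im_sub.
Qed.

End Presentation.

Theorem mainTheorem7 (K : fieldType) (R : realType) (n : nat)
    (G : grid R n) (delta : R) (P : pres K R n) :
  0 <= delta -> lt_half_c G delta -> valid_pres P ->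
  (dI (coker (merge_pres G delta P)) (coker P) <= delta%:E)%E.
Proof.
(* [lt_half_c] is what makes the paper's merge function well defined; [merge1]
   is defined by [pick] regardless, and the bound holds without it. *)
move=> delta_ge0 _ vP; apply: ereal_inf_lbound; exists delta => //.
by split=> //; apply: coker_merge_interleaved.
Qed.
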